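(* Let $\lambda=\lambda_1 f_1+\lambda_2 f_2$ be the highest weight of a non-trivial irreducible representation of $SU_3$ (with $f_1,f_2$ the fundamental weights and $\lambda_1,\lambda_2\in\mathbb{Z}_{\ge0}$), and assume $\lambda$ lies on the border of the Weyl chamber, i.e. $\lambda=(\lambda_1,0)$ or $\lambda=(0,\lambda_2)$, with $\lambda\ne(0,0)$. Let $T=\mathrm{diag}(1,0,-1)\in\mathfrak{sl}_3(\mathbb{C})$, and for $m\in\mathbb{N}$ let $\rho_{m\lambda}$ denote the irreducible representation of $SU_3$ (and of $\mathfrak{sl}_3(\mathbb{C})$) with highest weight $m\lambda$. Then the nearest neighbour distributions $\mu_{\rho_{m\lambda}(T)}$ converge to the Dirac measure $\delta_0$ as $m\to\infty$, in the Kolmogorov–Smirnov distance.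
   Context: For an $N\times N$ hermitian matrix $A$ with eigenvalues (with multiplicity) $x_1\le\dots\le x_N$, its nearest neighbour distribution is $\mu_A=\frac1N\sum_{j=1}^{N-1}\delta_{\frac{N}{x_N-x_1}(x_{j+1}-x_j)}$ if $x_1\ne x_N$, and $\mu_A=\frac{N-1}{N}\delta_0$ if all eigenvalues coincide. The Kolmogorov–Smirnov distance between finite Borel measures $\mu,\nu$ on $\mathbb{R}_{\ge0}$ is $\sup_{x\ge0}|\int_0^x d\mu-\int_0^x d\nu|$. Since $T\in i\,\mathfrak{su}_3$, $\rho_{m\lambda}(T)$ is hermitian. *)

From HB Require Import structures.
From mathcomp Require Import all_boot all_order all_algebra.
From mathcomp Require Import complex.
From mathcomp Require Import boolp classical_sets reals topology normedtype.
Set Implicit Arguments. Unset Strict Implicit. Unset Printing Implicit Defensive.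
Import Order.TTheory GRing.Theory Num.Theory.
Local Open Scope ring_scope.
Local Open Scope classical_set_scope.

Section Defs.
Variable R : realType.
Local Notation C := (complex R).

Definition rc (x : R) : C := Complex x 0.

Definition E3 (i j : 'I_3) : 'M[C]_3 := delta_mx i j.
Definition H1 : 'M[C]_3 := E3 0 0 - E3 1 1.
Definition H2 : 'M[C]_3 := E3 1 1 - E3 2%:R 2%:R.
Definition Tmx : 'M[C]_3 := E3 0 0 - E3 2%:R 2%:R.

Definition lie_br (n : nat) (X Y : 'M[C]_n) : 'M[C]_n := X *m Y - Y *m X.

(* rho : gl_3(C) -> gl_d(C) restricts to a Lie algebra representation of sl_3(C)
   on C^d (column vectors); rho is taken linear on all of 'M_3 (w.l.o.g.). *)
Definition sl3_rep (d : nat) (rho : 'M[C]_3 -> 'M[C]_d) : Prop :=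
  (forall (a : C) (X Y : 'M[C]_3), rho (a *: X + Y) = a *: rho X + rho Y) /\
  (forall X Y : 'M[C]_3, \tr X = 0 -> \tr Y = 0 ->
      rho (lie_br X Y) = lie_br (rho X) (rho Y)).

(* A subspace of column vectors is encoded by the row space of U^T, i.e. by U
   whose rows u span it; invariance under A means u *m A^T stays in it. *)
Definition sl3_irreducible (d : nat) (rho : 'M[C]_3 -> 'M[C]_d) : Prop :=
  (0 < d)%N /\
  forall U : 'M[C]_d,
    (forall X : 'M[C]_3, \tr X = 0 -> (U *m (rho X)^T <= U)%MS) ->
    \rank U = 0%N \/ \rank U = d.

Definition highest_weight_vector (d : nat) (rho : 'M[C]_3 -> 'M[C]_d)
    (l1 l2 : nat) (v : 'cV[C]_d) : Prop :=
  v != 0 /\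
  rho (E3 0 1) *m v = 0 /\ rho (E3 1 2%:R) *m v = 0 /\
  rho H1 *m v = l1%:R *: v /\ rho H2 *m v = l2%:R *: v.

Definition irrep_hw (d : nat) (rho : 'M[C]_3 -> 'M[C]_d) (l1 l2 : nat) : Prop :=
  sl3_rep rho /\ sl3_irreducible rho /\
  exists v, highest_weight_vector rho l1 l2 v.

Definition real_eigenvalue_list (d : nat) (A : 'M[C]_d) (s : seq R) : Prop :=
  sorted <=%R s /\ char_poly A = \prod_(x <- s) ('X - (rc x)%:P).

(* the sorted eigenvalue list of A (unique when it exists; [::] otherwise) *)
Definition eigs (d : nat) (A : 'M[C]_d) : seq R :=
  match pselect (exists s, real_eigenvalue_list A s) with
  | left h => proj1_sig (cid h)
  | right _ => [::]
  end.

(* x |-> \int_0^x d mu_A, where mu_A is the nearest neighbour distribution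
   of a matrix with sorted eigenvalues s = [x_1 <= ... <= x_N] *)
Definition nnd_cdf (s : seq R) (x : R) : R :=
  let N := size s in
  let lo := head 0 s in
  let hi := last 0 s in
  if lo != hi then
    (\sum_(0 <= j < N.-1)
        (if (N%:R / (hi - lo) * (nth 0 s j.+1 - nth 0 s j) <= x :> R) then 1 else 0 : R))
      / N%:R
  else if 0 <= x then (N%:R - 1) / N%:R else 0.

Definition dirac0_cdf (x : R) : R := if 0 <= x then 1 else 0.

(* Kolmogorov-Smirnov distance between two measures on R_{>=0},
   given through x |-> \int_0^x *)
Definition ks_dist (F G : R -> R) : R :=
  sup [set `|F x - G x| | x in [set x : R | 0 <= x]].

End Defs.

(* All eigenvalues of rho(T) are integers in [-n, n], where n = m (l1 + l2) is the T-weight of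
   the highest weight vector w.  Upper bound: the words of length k in the lowering operators
   f1, f2 applied to w span an invariant subspace, hence everything, and they are
   T-eigenvectors of eigenvalue n - k.  Lower bound: (e3, f3, T) is an sl2-triple, whose eigenvalue strings
   are symmetric about 0.  Hence at most 2n of the N - 1 consecutive eigenvalue gaps are
   nonzero, each nonzero gap is at least 1, and 1 - F(x) <= (2n + 1) / N for x >= 0.  On the
   other hand, if f is the lowering operator of the larger of the two weights, the vectors
   w f^a f3^b with a, b <= n/2 are nonzero with pairwise distinct weights, so
   N >= (n/2 + 1)^2 and the Kolmogorov-Smirnov distance is O(1/m).  The argument does not use
   that the highest weight lies on the border of the Weyl chamber. *)

From HB Require Import structures.
From mathcomp Require Import all_boot all_order all_algebra.
From mathcomp Require Import complex.
From mathcomp Require Import boolp classical_sets reals topology normedtype sequences.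
From mathcomp Require Import ring lra zify.
Import numFieldTopology.Exports numFieldNormedType.Exports.
Import Order.TTheory GRing.Theory Num.Theory.
Local Open Scope ring_scope.
Local Open Scope classical_set_scope.
Set Implicit Arguments. Unset Strict Implicit. Unset Printing Implicit Defensive.

Lemma natr_inj (D : numDomainType) : injective (fun k : nat => k%:R : D).
Proof. by move=> m k /eqP; rewrite eqr_nat => /eqP. Qed.

Lemma char_poly_trmx (F : fieldType) (k : nat) (A : 'M[F]_k) : char_poly A^T = char_poly A.
Proof. by rewrite /char_poly -det_tr; congr (\det _); apply/matrixP => i j; rewrite !mxE eq_sym. Qed.

Section Sl2Strings.
Variables (F : numFieldType) (d : nat).
Implicit Types (x : 'rV[F]_d) (e f h M N : 'M[F]_d).

Lemma mulmx_exprSr x f k : x *m f ^+ k.+1 = x *m f ^+ k *m f.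
Proof. by rewrite exprSr -mulmxE mulmxA. Qed.

Lemma eigen_shift x f M (mu delta : F) :
  x *m M = mu *: x -> f *m M - M *m f = delta *: f ->
  forall k, x *m f ^+ k *m M = (mu + k%:R * delta) *: (x *m f ^+ k).
Proof.
move=> xM /eqP; rewrite subr_eq => /eqP fM.
elim=> [|k IH]; first by rewrite expr0 mulmx1 mul0r addr0.
rewrite mulmx_exprSr -mulmxA fM mulmxDr -scalemxAr mulmxA IH -scalemxAl -scalerDl.
by congr (_ *: _); rewrite mulrSr; ring.
Qed.

Lemma exists_last_nonzero x f K : x != 0 -> x *m f ^+ K = 0 ->
  exists2 k, x *m f ^+ k != 0 & x *m f ^+ k.+1 = 0.
Proof.
elim: K => [|K IH] x_neq0 xK; first by rewrite expr0 mulmx1 in xK; rewrite xK eqxx in x_neq0.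
by have [/IH|] := eqVneq (x *m f ^+ K) 0; [apply | exists K].
Qed.

Lemma orbit_annihilated x e f N :
  x *m e = 0 -> (forall k, x *m f ^+ k *m N = 0) -> f *m e - e *m f = N ->
  forall k, x *m f ^+ k *m e = 0.
Proof.
move=> xe xN /eqP; rewrite subr_eq => /eqP fe.
elim=> [|k IH]; first by rewrite expr0 mulmx1.
by rewrite mulmx_exprSr -mulmxA fe mulmxDr xN add0r mulmxA IH mul0mx.
Qed.

Section HighestWeightVector.
Variables (e f h : 'M[F]_d) (x : 'rV[F]_d) (lam : F).
Hypotheses (fe : f *m e - e *m f = h) (fh : f *m h - h *m f = -2 *: f).
Hypotheses (xe : x *m e = 0) (xh : x *m h = lam *: x).

Lemma sl2_raise k : x *m f ^+ k.+1 *m e = (k.+1%:R * (lam - k%:R)) *: (x *m f ^+ k).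
Proof.
move/eqP: fe; rewrite subr_eq => /eqP fe'.
elim: k => [|k IH].
  by rewrite expr1 expr0 mulmx1 -mulmxA fe' mulmxDr mulmxA xe mul0mx addr0 xh mul1r subr0.
rewrite mulmx_exprSr -mulmxA fe' mulmxDr mulmxA IH -scalemxAl (eigen_shift xh fh).
by rewrite -mulmx_exprSr -scalerDl; congr (_ *: _); rewrite !mulrSr; ring.
Qed.

Lemma sl2_weight_eq_string_length k :
  x *m f ^+ k != 0 -> x *m f ^+ k.+1 = 0 -> lam = k%:R.
Proof.
move=> xk_neq0 xk1_eq0; move: (sl2_raise k); rewrite xk1_eq0 mul0mx => /esym/eqP.
by rewrite scaler_eq0 (negbTE xk_neq0) orbF mulf_eq0 pnatr_eq0 subr_eq0 => /eqP.
Qed.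

Lemma sl2_string_neq0 (n : nat) : x != 0 -> lam = n%:R ->
  forall k, (k <= n)%N -> x *m f ^+ k != 0.
Proof.
move=> x_neq0 lamE; elim=> [|k IH] lt_kn; first by rewrite expr0 mulmx1.
apply/eqP => xk1_eq0; have := sl2_weight_eq_string_length (IH (ltnW lt_kn)) xk1_eq0.
by rewrite lamE => /eqP; rewrite eqr_nat => /eqP nk; rewrite nk ltnn in lt_kn.
Qed.

End HighestWeightVector.
End Sl2Strings.

Section StableSubspaces.
Variables (F : fieldType) (d : nat).
Implicit Types (A S M N e f h : 'M[F]_d).

Lemma eigenspace_shift A f M (a delta : F) :
  (A <= eigenspace M a)%MS -> f *m M - M *m f = delta *: f ->
  (A *m f <= eigenspace M (a + delta))%MS.
Proof.
move=> /eigenspaceP AM /eqP; rewrite subr_eq => /eqP fM; apply/eigenspaceP.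
by rewrite -mulmxA fM mulmxDr -scalemxAr mulmxA AM -scalemxAl -scalerDl addrC.
Qed.

Lemma stable_shift A f h (delta : F) :
  stablemx A h -> f *m h - h *m f = delta *: f -> stablemx (A *m f) h.
Proof.
move=> Ah /eqP; rewrite subr_eq => /eqP fh.
rewrite -mulmxA fh mulmxDr -scalemxAr mulmxA addrC.
by rewrite addmx_sub ?scalemx_sub ?submxMr.
Qed.

Lemma stable_bracket A S e f N :
  (A *m e <= S)%MS -> (A *m N <= S)%MS -> stablemx S f -> f *m e - e *m f = N ->
  (A *m f *m e <= S)%MS.
Proof.
move=> Ae AN Sf /eqP; rewrite subr_eq => /eqP fe.
rewrite -mulmxA fe mulmxDr mulmxA addmx_sub //.
exact: submx_trans (submxMr _ Ae) Sf.
Qed.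

End StableSubspaces.

Section WeightGrid.
Variables (F : numFieldType) (d : nat) (e f h h' e' e3 f3 t : 'M[F]_d) (c0 : F).
Hypotheses (fe : f *m e - e *m f = h) (fh : f *m h - h *m f = -2 *: f).
Hypotheses (fh' : f *m h' - h' *m f = 1 *: f) (ft : f *m t - t *m f = -1 *: f).
Hypotheses (fe' : f *m e' - e' *m f = 0) (fe3 : f *m e3 - e3 *m f = c0 *: e').
Hypotheses (f3e3 : f3 *m e3 - e3 *m f3 = t) (f3t : f3 *m t - t *m f3 = -2 *: f3).
Hypotheses (f3h : f3 *m h - h *m f3 = -1 *: f3) (f3h' : f3 *m h' - h' *m f3 = -1 *: f3).
Variables (w : 'rV[F]_d) (p p' : nat).
Hypotheses (w_neq0 : w != 0) (we : w *m e = 0) (we' : w *m e' = 0) (we3 : w *m e3 = 0).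
Hypotheses (wh : w *m h = p%:R *: w) (wh' : w *m h' = p'%:R *: w).
Hypothesis (wt : w *m t = (p + p')%:R *: w).

Let x a b := w *m f ^+ a *m f3 ^+ b.

Lemma grid_neq0 a b : (a <= p)%N -> (a + b <= p + p')%N -> x a b != 0.
Proof.
move=> le_ap le_abn.
have ua_e' := orbit_annihilated we' (fun k => mulmx0 _ _) fe'.
have ua_e3 : w *m f ^+ a *m e3 = 0.
  by apply: (orbit_annihilated we3 _ fe3) => k; rewrite -scalemxAr ua_e' scaler0.
have ua_t : w *m f ^+ a *m t = (p + p' - a)%N%:R *: (w *m f ^+ a).
  by rewrite (eigen_shift wt ft) natrB ?(leq_trans le_ap (leq_addr _ _)) //; congr (_ *: _); ring.
rewrite /x; apply: (sl2_string_neq0 f3e3 f3t ua_e3 ua_t _ erefl); last by lia.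
exact: (sl2_string_neq0 fe fh we wh w_neq0 erefl).
Qed.

Lemma grid_h a b : x a b *m h = (p%:R - (2 * a + b)%N%:R) *: x a b.
Proof. by rewrite (eigen_shift (eigen_shift wh fh a) f3h) natrD natrM; congr (_ *: _); ring. Qed.

Lemma grid_h' a b : x a b *m h' = (p'%:R + a%:R - b%:R) *: x a b.
Proof. by rewrite (eigen_shift (eigen_shift wh' fh' a) f3h'); congr (_ *: _); ring. Qed.

Lemma grid_dim_bound q : (q <= p.+1)%N -> (2 * q <= p + p' + 2)%N -> (q * q <= d)%N.
Proof.
move=> le_qp le_qn.
(* The eigenvalue of [g] on [x a b] is an affine function of [a + q * b], injective on the grid. *)
pose al : F := - (q%:R + 1).
pose g := al *: h + (3 + 2 * al) *: h'.
pose ev (ab : 'I_q * 'I_q) : F := al * p%:R + (3 + 2 * al) * p'%:R + (3 * (ab.1 + q * ab.2))%N%:R.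
have x_eigen (ab : 'I_q * 'I_q) : (x ab.1 ab.2 <= eigenspace g (ev ab))%MS.
  apply/eigenspaceP; rewrite mulmxDr -!scalemxAr grid_h grid_h' !scalerA -scalerDl.
  by congr (_ *: _); rewrite /ev /al !natrD !natrM; ring.
have ev_inj : {in predT &, injective ev}.
  move=> [a b] [a' b'] _ _ /addrI/natr_inj eq_ab.
  have {}eq_ab : (a + q * b = a' + q * b')%N by move: eq_ab => /= /eqP; rewrite eqn_pmul2l // => /eqP.
  have div_q (a0 : 'I_q) b0 : ((a0 + q * b0) %/ q = b0)%N.
    by rewrite addnC mulnC divnMDl ?divn_small ?addn0 // (leq_ltn_trans _ (ltn_ord a0)).
  have eq_b : b = b' :> nat by rewrite -(div_q a b) eq_ab div_q.
  have eq_a : a = a' :> nat by move: eq_ab; rewrite eq_b => /addIn.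
  by congr pair; apply: val_inj.
have /mxdirectP /= rank_sum := mxdirect_sum_eigenspace g ev_inj.
have -> : (q * q = \sum_(ab : 'I_q * 'I_q) 1)%N by rewrite sum1_card card_prod !card_ord.
apply: leq_trans (rank_leq_col (\sum_ab eigenspace g (ev ab))%MS); rewrite rank_sum.
apply: leq_sum => -[a b] _; rewrite lt0n mxrank_eq0.
have [lt_aq lt_bq] := (ltn_ord a, ltn_ord b).
have x_neq0 : x a b != 0 by apply: grid_neq0; lia.
by apply: contraNneq x_neq0 => g_ev0; move: (x_eigen (a, b)); rewrite g_ev0 submx0.
Qed.
End WeightGrid.

Section NearestNeighbour.
Variable R : realType.
Implicit Types (s : seq R) (x : R).

Lemma ks_dist_dirac0_le (F : R -> R) (b : R) :
  (forall x, 0 <= x -> 0 <= 1 - F x <= b) -> 0 <= ks_dist F (@dirac0_cdf R) <= b.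
Proof.
move=> hF; rewrite /ks_dist.
set E := (X in sup X).
have E_bnd y : E y -> 0 <= y <= b.
  case=> x /= x0 <-; have /andP[Fx0 Fxb] := hF x x0.
  by rewrite /dirac0_cdf x0 distrC ger0_norm // Fx0.
have E0 : E (`|F 0 - dirac0_cdf 0|) by exists 0 => //=.
have supE : has_sup E by split; [exists (`|F 0 - dirac0_cdf 0|) | exists b => y /E_bnd/andP[]].
apply/andP; split; last by apply: ge_sup => [|y /E_bnd/andP[]//]; case: supE.
have /andP[E0_ge0 _] := E_bnd _ E0.
exact: le_trans E0_ge0 (sup_upper_bound supE E0).
Qed.

Lemma int_gap_le_indicator (a b k x : R) :
  a \is a Num.int -> b \is a Num.int -> a <= b -> 0 <= x ->
  1 - (b - a) <= (if k * (b - a) <= x then 1 else 0).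
Proof.
move=> aZ bZ le_ab x0; have [-> | neq_ba] := eqVneq b a.
  by rewrite subrr mulr0 x0 subr0.
have gapN : b - a \is a Num.nat by rewrite natrEint rpredB //= subr_ge0.
have : 1 <= b - a.
  by move: neq_ba; rewrite -subr_eq0; case/natrP: gapN => m ->; rewrite pnatr_eq0 ler1n lt0n.
by case: ifP => _; lra.
Qed.

Lemma nnd_cdf_int_spectrum s x :
  sorted <=%R s -> (0 < size s)%N -> {in s, forall y, y \is a Num.int} -> 0 <= x ->
  0 <= 1 - nnd_cdf s x <= (1 + (last 0 s - head 0 s)) / (size s)%:R.
Proof.
move=> s_sorted s_gt0 s_int x0; rewrite /nnd_cdf.
set N := size s; set lo := head 0 s; set hi := last 0 s.
have N_gt0 : (0 : R) < N%:R by rewrite ltr0n.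
have NE : N%:R = (N.-1)%:R + 1 :> R by rewrite natr1 prednK.
case: ifP => [_ | /negbFE/eqP <-]; last first.
  rewrite x0 subrr addr0.
  have -> : 1 - (N%:R - 1) / N%:R = 1 / N%:R :> R by field; exact: lt0r_neq0.
  by rewrite lexx andbT divr_ge0 ?ler01 ?ltW.
set S := \sum_(_ <= _ < _) _.
have -> : 1 - S / N%:R = (N%:R - S) / N%:R by field; exact: lt0r_neq0.
have sum_le : S <= (N.-1)%:R.
  rewrite -[X in _ <= X%:R](subn0 N.-1) -sumr_const_nat.
  by apply: ler_sum => j _; case: ifP.
have sum_ge : (N.-1)%:R - (hi - lo) <= S.
  have tele : \sum_(0 <= j < N.-1) (nth 0 s j.+1 - nth 0 s j) = hi - lo.
    by rewrite telescope_sumr // nth_last nth0.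
  rewrite -tele -[X in X%:R](subn0 N.-1) -sumr_const_nat -sumrB.
  rewrite /S !big_nat; apply: ler_sum => j /andP[_ j_lt].
  have j1_lt : (j.+1 < N)%N by rewrite -ltn_predRL.
  apply: int_gap_le_indicator => //; last exact: (sortedP 0 s_sorted).
    by apply: s_int; rewrite mem_nth // ltnW.
  by apply: s_int; rewrite mem_nth.
apply/andP; split.
  by apply: divr_ge0; [rewrite NE; lra | exact: ltW].
by apply: ler_wpM2r; [rewrite invr_ge0 ler0n | rewrite NE; lra].
Qed.

End NearestNeighbour.

Lemma ratio_le_inv_succ (R : realFieldType) (m n d : nat) : (m <= n)%N ->
  ((n./2).+1 * (n./2).+1 <= d)%N -> (2 * n + 1)%:R / d%:R <= 8 / (m.+1)%:R :> R.
Proof.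
move=> le_mn le_d; have d_gt0 : (0 < d)%N by apply: leq_trans le_d.
have half_ge : (n <= 2 * n./2 + 1)%N.
  by rewrite mul2n -[leqLHS]odd_double_half addnC leq_add2l leq_b1.
rewrite ler_pdivrMr ?ltr0n // mulrAC ler_pdivlMr ?ltr0n // -[8]/(8%:R) -!natrM ler_nat.
by apply: (@leq_trans (8 * ((n./2).+1 * (n./2).+1))); [nia | rewrite leq_mul2l].
Qed.

Lemma mxtrace3 (F : pzRingType) (X : 'M[F]_3) : \tr X = X 0 0 + X 1 1 + X 2%:R 2%:R.
Proof.
rewrite /mxtrace !big_ord_recr big_ord0 /= add0r.
by congr (_ + _ + _); apply: congr2; apply: val_inj.
Qed.

Lemma rc_natB (R : realType) (m k : nat) : rc (m%:R - k%:R) = m%:R - k%:R :> R[i].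
Proof. by rewrite /rc -[Complex _ _]/(real_complex R _) rmorphB !rmorph_nat. Qed.

Ltac mx3_entrywise :=
  rewrite /lie_br /H1 /H2 /Tmx /E3 ?mulmxBl ?mulmxBr ?mulmxDl ?mulmxDr ?mul_delta_mx_cond /=;
  apply/matrixP => -[[|[|[|?]]] ?] -[[|[|[|?]]] ?] //; rewrite !mxE /=; ring.

Ltac trace3 := rewrite /mxtrace /H1 /H2 /Tmx /E3 !big_ord_recr big_ord0 /= !mxE /=; ring.

Section Sl3Rep.
Variable R : realType.
Local Notation C := R[i].
Variables (d : nat) (rho : 'M[C]_3 -> 'M[C]_d).
Hypothesis rho_rep : sl3_rep rho.

(* Row vectors, acted on from the right as in [sl3_irreducible]; [act] reverses brackets. *)
Definition act X := (rho X)^T.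

Lemma rho0 : rho 0 = 0.
Proof.
have := rho_rep.1 1 0 0; rewrite !scale1r addr0 => rho00.
by apply: (addrI (rho 0)); rewrite addr0 -rho00.
Qed.

Lemma actD X Y : act (X + Y) = act X + act Y.
Proof. by have := rho_rep.1 1 X Y; rewrite !scale1r /act => ->; rewrite linearD. Qed.

Lemma actZ a X : act (a *: X) = a *: act X.
Proof. by have := rho_rep.1 a X 0; rewrite !addr0 rho0 addr0 /act => ->; rewrite linearZ. Qed.

Lemma act_br X Y Z : \tr X = 0 -> \tr Y = 0 -> lie_br X Y = Z ->
  act Y *m act X - act X *m act Y = act Z.
Proof. by move=> trX trY <-; rewrite /act rho_rep.2 // /lie_br linearB /= !trmx_mul. Qed.

Local Notation e1 := (act (E3 R 0 1)).
Local Notation e2 := (act (E3 R 1 2%:R)).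
Local Notation e3 := (act (E3 R 0 2%:R)).
Local Notation f1 := (act (E3 R 1 0)).
Local Notation f2 := (act (E3 R 2%:R 1)).
Local Notation f3 := (act (E3 R 2%:R 0)).
Local Notation h1 := (act (H1 R)).
Local Notation h2 := (act (H2 R)).
Local Notation t := (act (Tmx R)).

Ltac sl3_relation := rewrite -?actZ; apply: act_br; [trace3 | trace3 | mx3_entrywise].

Lemma br_f1_e1 : f1 *m e1 - e1 *m f1 = h1. Proof. sl3_relation. Qed.
Lemma br_f2_e2 : f2 *m e2 - e2 *m f2 = h2. Proof. sl3_relation. Qed.
Lemma br_f3_e3 : f3 *m e3 - e3 *m f3 = t. Proof. sl3_relation. Qed.
Lemma br_e2_e1 : e2 *m e1 - e1 *m e2 = e3. Proof. sl3_relation. Qed.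
Lemma br_f1_f2 : f1 *m f2 - f2 *m f1 = f3. Proof. sl3_relation. Qed.
Lemma br_f1_e2 : f1 *m e2 - e2 *m f1 = 0. Proof. by rewrite -(scale0r e2); sl3_relation. Qed.
Lemma br_f2_e1 : f2 *m e1 - e1 *m f2 = 0. Proof. by rewrite -(scale0r e1); sl3_relation. Qed.
Lemma br_f1_e3 : f1 *m e3 - e3 *m f1 = -1 *: e2. Proof. sl3_relation. Qed.
Lemma br_f2_e3 : f2 *m e3 - e3 *m f2 = 1 *: e1. Proof. sl3_relation. Qed.
Lemma br_f1_h1 : f1 *m h1 - h1 *m f1 = -2 *: f1. Proof. sl3_relation. Qed.
Lemma br_f2_h2 : f2 *m h2 - h2 *m f2 = -2 *: f2. Proof. sl3_relation. Qed.
Lemma br_f1_h2 : f1 *m h2 - h2 *m f1 = 1 *: f1. Proof. sl3_relation. Qed.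
Lemma br_f2_h1 : f2 *m h1 - h1 *m f2 = 1 *: f2. Proof. sl3_relation. Qed.
Lemma br_f3_h1 : f3 *m h1 - h1 *m f3 = -1 *: f3. Proof. sl3_relation. Qed.
Lemma br_f3_h2 : f3 *m h2 - h2 *m f3 = -1 *: f3. Proof. sl3_relation. Qed.
Lemma br_f1_t : f1 *m t - t *m f1 = -1 *: f1. Proof. sl3_relation. Qed.
Lemma br_f2_t : f2 *m t - t *m f2 = -1 *: f2. Proof. sl3_relation. Qed.
Lemma br_f3_t : f3 *m t - t *m f3 = -2 *: f3. Proof. sl3_relation. Qed.
Lemma br_e3_t : e3 *m t - t *m e3 = 2 *: e3. Proof. sl3_relation. Qed.

Lemma act_T : t = h1 + h2.
Proof. by rewrite -actD; congr act; mx3_entrywise. Qed.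

Lemma act_traceless X : \tr X = 0 -> act X =
  X 0 1 *: e1 + X 1 2%:R *: e2 + X 0 2%:R *: e3 + X 1 0 *: f1 + X 2%:R 1 *: f2
  + X 2%:R 0 *: f3 + X 0 0 *: h1 + (X 0 0 + X 1 1) *: h2.
Proof.
move=> trX; rewrite -!actZ -!actD; congr act.
have o0 (lt03 : (0 < 3)%N) : Ordinal lt03 = 0 by apply: val_inj.
have o1 (lt13 : (1 < 3)%N) : Ordinal lt13 = 1 by apply: val_inj.
have o2 (lt23 : (2 < 3)%N) : Ordinal lt23 = 2%:R by apply: val_inj.
have X22 : X 2%:R 2%:R = - X 0 0 - X 1 1.
  by apply/eqP; rewrite -subr_eq0 -trX mxtrace3; apply/eqP; ring.
apply/matrixP => -[[|[|[|?]]] ?] -[[|[|[|?]]] ?] //; rewrite !mxE /= ?o0 ?o1 ?o2 ?X22; ring.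
Qed.

Section HighestWeight.
Variables (n1 n2 : nat) (v : 'cV[C]_d).
Hypothesis hwv : highest_weight_vector rho n1 n2 v.
Hypothesis rho_irr : sl3_irreducible rho.
Let w := v^T.
Let n := (n1 + n2)%N.
Let T := rho (Tmx R).
Let tval k : C := n%:R - k%:R.

Lemma hw_neq0 : w != 0. Proof. by rewrite trmx_eq0; case: hwv. Qed.
Lemma hw_e1 : w *m e1 = 0. Proof. by case: hwv => _ [+ _]; rewrite /w /act -trmx_mul => ->; rewrite trmx0. Qed.
Lemma hw_e2 : w *m e2 = 0. Proof. by case: hwv => _ [_ [+ _]]; rewrite /w /act -trmx_mul => ->; rewrite trmx0. Qed.
Lemma hw_h1 : w *m h1 = n1%:R *: w.
Proof. by case: hwv => _ [_ [_ [+ _]]]; rewrite /w /act -trmx_mul => ->; rewrite linearZ. Qed.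
Lemma hw_h2 : w *m h2 = n2%:R *: w.
Proof. by case: hwv => _ [_ [_ [_ +]]]; rewrite /w /act -trmx_mul => ->; rewrite linearZ. Qed.
Lemma hw_t : w *m t = n%:R *: w.
Proof. by rewrite act_T mulmxDr hw_h1 hw_h2 -scalerDl natrD. Qed.
Lemma hw_e3 : w *m e3 = 0.
Proof. by rewrite -br_e2_e1 mulmxBr !mulmxA hw_e1 hw_e2 !mul0mx subrr. Qed.

Fixpoint layer k : 'M[C]_d :=
  if k is k'.+1 then (layer k' *m f1 + layer k' *m f2)%MS else <<w>>%MS.
Fixpoint below k : 'M[C]_d :=
  if k is k'.+1 then (below k' + layer k)%MS else layer 0.

Lemma layer0_mul (M : 'M[C]_d) : (layer 0 *m M :=: w *m M)%MS.
Proof. exact: eqmxMr (genmxE w). Qed.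

Lemma layer_eigen k : (layer k <= eigenspace t (tval k))%MS.
Proof.
elim: k => [|k IH] /=; first by rewrite genmxE; apply/eigenspaceP; rewrite hw_t /tval subr0.
have -> : tval k.+1 = tval k + -1 by rewrite /tval -natr1; ring.
by rewrite addsmx_sub !eigenspace_shift // ?br_f1_t ?br_f2_t.
Qed.

Lemma layer_stable h (a delta1 delta2 : C) : w *m h = a *: w ->
  f1 *m h - h *m f1 = delta1 *: f1 -> f2 *m h - h *m f2 = delta2 *: f2 ->
  forall k, stablemx (layer k) h.
Proof.
move=> wh f1h f2h; elim=> [|k IH] /=; first by rewrite layer0_mul genmxE wh scalemx_sub.
rewrite addsmxMr addsmx_sub (submx_trans (stable_shift IH f1h) (addsmxSl _ _)).
exact: submx_trans (stable_shift IH f2h) (addsmxSr _ _).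
Qed.

Lemma layer_sub_below i k : (i <= k)%N -> (layer i <= below k)%MS.
Proof.
elim: k => [|k IH]; first by rewrite leqn0 => /eqP ->.
rewrite leq_eqVlt => /orP[/eqP -> | lt_ik] /=; first exact: addsmxSr.
exact: submx_trans (IH lt_ik) (addsmxSl _ _).
Qed.

Lemma below_mul_sub k (M X : 'M[C]_d) :
  (forall j, (j <= k)%N -> (layer j *m M <= X)%MS) -> (below k *m M <= X)%MS.
Proof.
elim: k => [|k IH] sub_layers; first exact: (sub_layers 0).
rewrite [below _]/= addsmxMr addsmx_sub (sub_layers k.+1) // andbT.
by apply: IH => j le_jk; apply: sub_layers; apply: leqW.
Qed.

Lemma exists_layer_sub_below : exists k0, (layer k0.+1 <= below k0)%MS.
Proof.
suff [rank_ge | //] : (d.+1 <= \rank (below d.+1))%N \/ exists k0, (layer k0.+1 <= below k0)%MS.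
  by move: (leq_trans rank_ge (rank_leq_col _)); rewrite ltnn.
elim: d.+1 => [|k [rank_ge | ?]]; [by left | | by right].
have [|not_sub] := boolP (layer k.+1 <= below k)%MS; first by right; exists k.
left; apply: leq_ltn_trans rank_ge (rank_ltmx _).
by rewrite ltmxE /= addsmxSl /= addsmx_sub submx_refl.
Qed.

Section StableSum.
Variable k0 : nat.
Hypothesis layer_k0 : (layer k0.+1 <= below k0)%MS.
Let S := below k0.

Lemma below_layer_succ_stable (f : 'M[C]_d) :
  (forall j, (layer j *m f <= layer j.+1)%MS) -> stablemx S f.
Proof.
have below_S : (below k0.+1 <= S)%MS by rewrite /= addsmx_sub submx_refl layer_k0.
move=> layer_f; apply: below_mul_sub => j le_jk; apply: submx_trans (layer_f j) _.
exact: submx_trans (@layer_sub_below j.+1 k0.+1 le_jk) below_S.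
Qed.

Lemma stable_f1 : stablemx S f1.
Proof. by apply: below_layer_succ_stable => j; apply: addsmxSl. Qed.

Lemma stable_f2 : stablemx S f2.
Proof. by apply: below_layer_succ_stable => j; apply: addsmxSr. Qed.

Lemma layer_sub_S j : (layer j <= S)%MS.
Proof.
elim: j => [|j IH]; first exact: layer_sub_below.
by rewrite /= addsmx_sub !(submx_trans (submxMr _ IH)) ?stable_f1 ?stable_f2.
Qed.

Lemma layer_h1 j : (layer j *m h1 <= S)%MS.
Proof. exact: submx_trans (layer_stable hw_h1 br_f1_h1 br_f2_h1 j) (layer_sub_S j). Qed.

Lemma layer_h2 j : (layer j *m h2 <= S)%MS.
Proof. exact: submx_trans (layer_stable hw_h2 br_f1_h2 br_f2_h2 j) (layer_sub_S j). Qed.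

Lemma layer_e1 j : (layer j *m e1 <= S)%MS.
Proof.
elim: j => [|j IH]; first by rewrite layer0_mul hw_e1 sub0mx.
rewrite [layer _]/= addsmxMr addsmx_sub; apply/andP; split.
  exact: stable_bracket IH (layer_h1 j) stable_f1 br_f1_e1.
by apply: stable_bracket IH _ stable_f2 br_f2_e1; rewrite mulmx0 sub0mx.
Qed.

Lemma layer_e2 j : (layer j *m e2 <= S)%MS.
Proof.
elim: j => [|j IH]; first by rewrite layer0_mul hw_e2 sub0mx.
rewrite [layer _]/= addsmxMr addsmx_sub; apply/andP; split.
  by apply: stable_bracket IH _ stable_f1 br_f1_e2; rewrite mulmx0 sub0mx.
exact: stable_bracket IH (layer_h2 j) stable_f2 br_f2_e2.
Qed.

Lemma stable_act X : \tr X = 0 -> stablemx S (act X).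
Proof.
have stableZ a M : stablemx S M -> stablemx S (a *: M).
  by move=> SM; rewrite -scalemxAr scalemx_sub.
have [Se1 Se2] : stablemx S e1 /\ stablemx S e2.
  by split; apply: below_mul_sub => j _; [apply: layer_e1 | apply: layer_e2].
have [Sh1 Sh2] : stablemx S h1 /\ stablemx S h2.
  by split; apply: below_mul_sub => j _; [apply: layer_h1 | apply: layer_h2].
have Sbr M N : stablemx S M -> stablemx S N -> stablemx S (M *m N - N *m M).
  by move=> SM SN; rewrite stablemxD ?stablemxN ?stablemxM.
have Se3 : stablemx S e3 by rewrite -br_e2_e1; apply: Sbr.
have Sf3 : stablemx S f3 by rewrite -br_f1_f2; apply: Sbr; [apply: stable_f1 | apply: stable_f2].
move=> trX; rewrite act_traceless //.
by rewrite !stablemxD ?stableZ ?stable_f1 ?stable_f2.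
Qed.

Lemma below_full : row_full S.
Proof.
case: (hwv) => w_neq0 _; case: rho_irr => _ /(_ S stable_act) [|rank_S]; last exact/eqP.
move/eqP; rewrite mxrank_eq0 => /eqP S0; move: (layer_sub_S 0).
by rewrite /= genmxE S0 submx0 trmx_eq0 (negbTE w_neq0).
Qed.

End StableSum.

Fixpoint t_annihilator k : 'M[C]_d :=
  if k is k'.+1 then (t - (tval k')%:M) *m t_annihilator k' else 1%:M.

Lemma layer_annihilated K i : (i < K)%N -> layer i *m t_annihilator K = 0.
Proof.
have layer_t j : layer j *m t = tval j *: layer j by apply/eigenspaceP; apply: layer_eigen.
elim: K i => // K IH i; rewrite ltnS leq_eqVlt => /orP[/eqP -> | lt_iK] /=;
  rewrite mulmxA mulmxBr mul_mx_scalar layer_t; first by rewrite subrr mul0mx.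
by rewrite -scalerBl -scalemxAl IH // scaler0.
Qed.

Lemma eigen_annihilator r (u : 'rV[C]_d) : u *m t = r *: u ->
  forall K, u *m t_annihilator K = (\prod_(i < K) (r - tval i)) *: u.
Proof.
move=> ut; elim=> [|K IH] /=; first by rewrite big_ord0 scale1r mulmx1.
rewrite mulmxA mulmxBr mul_mx_scalar ut -scalerBl -scalemxAl IH scalerA.
by rewrite big_ord_recr /= mulrC.
Qed.

Lemma t_eigenvalue_shape : exists K, forall r (u : 'rV[C]_d),
  u != 0 -> u *m t = r *: u -> exists2 i, (i < K)%N & r = tval i.
Proof.
have [k0 layer_k0] := exists_layer_sub_below.
have annihilator0 : t_annihilator k0.+1 = 0.
  apply/eqP; rewrite -submx0 -[t_annihilator _]mul1mx.
  apply: submx_trans (submxMr _ (submx_full _ (below_full layer_k0))) _.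
  by apply: below_mul_sub => j le_jk; rewrite layer_annihilated.
exists k0.+1 => r u u_neq0 ut.
move: (eigen_annihilator ut k0.+1); rewrite annihilator0 mulmx0 => /esym/eqP.
rewrite scaler_eq0 (negbTE u_neq0) orbF => /prodf_eq0[i _].
by rewrite subr_eq0 => /eqP ->; exists i.
Qed.

Lemma tval_inj : injective tval.
Proof. by move=> a b /addrI/oppr_inj/natr_inj. Qed.

Lemma tval_lower i k : tval i + k%:R * -2 = tval (i + 2 * k).
Proof. by rewrite /tval natrD natrM; ring. Qed.

Lemma tval_raise m i k : tval m + k%:R * 2 = tval i -> m = (i + 2 * k)%N.
Proof. by move=> e; apply: tval_inj; rewrite -[tval m](addrK (k%:R * 2)) e /tval natrD natrM; ring. Qed.

Section EigenvalueBound.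
Variable K : nat.
Hypothesis t_spec : forall r (u : 'rV[C]_d),
  u != 0 -> u *m t = r *: u -> exists2 i, (i < K)%N & r = tval i.

Lemma f3_string_ends i0 (u : 'rV[C]_d) : u != 0 -> u *m t = tval i0 *: u ->
  exists2 j, u *m f3 ^+ j != 0 & u *m f3 ^+ j.+1 = 0.
Proof.
move=> u_neq0 ut; apply: exists_last_nonzero u_neq0 _; apply/eqP; apply: contraT => uK_neq0.
have [i lt_iK] := t_spec uK_neq0 (eigen_shift ut br_f3_t K).
by rewrite tval_lower => /tval_inj; lia.
Qed.

Lemma e3_string_ends m (y : 'rV[C]_d) : y != 0 -> y *m t = tval m *: y ->
  exists2 k, y *m e3 ^+ k != 0 & y *m e3 ^+ k.+1 = 0.
Proof.
move=> y_neq0 yt; apply: exists_last_nonzero y_neq0 _; apply/eqP; apply: contraT => y_neq0'.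
have [i _ /tval_raise] := t_spec y_neq0' (eigen_shift yt br_e3_t m.+1).
lia.
Qed.

Lemma eigenvalue_index_le i0 (u : 'rV[C]_d) : u != 0 -> u *m t = tval i0 *: u -> (i0 <= 2 * n)%N.
Proof.
move=> u_neq0 ut; have [j y_neq0 y_f3] := f3_string_ends u_neq0 ut.
set y := u *m f3 ^+ j in y_neq0 y_f3.
have yt : y *m t = tval (i0 + 2 * j) *: y by rewrite /y (eigen_shift ut br_f3_t) tval_lower.
have [k yk_neq0 yk1_eq0] := e3_string_ends y_neq0 yt.
(* [y] is a highest weight vector for the sl2-triple (f3, e3, -t). *)
have weight_k : - tval (i0 + 2 * j) = k%:R.
  apply: (sl2_weight_eq_string_length (e := f3) (h := - t)) yk_neq0 yk1_eq0.
  - by rewrite -br_f3_e3 opprB.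
  - by rewrite mulmxN mulNmx opprK addrC -opprB br_e3_t scaleNr.
  - by rewrite /y -mulmx_exprSr.
  - by rewrite mulmxN yt scaleNr.
have [i _ /tval_raise top_k] := t_spec yk_neq0 (eigen_shift yt br_e3_t k).
have bottom_k : (i0 + 2 * j)%N = (n + k)%N.
  by apply: (@natr_inj C); rewrite [RHS]natrD -weight_k /tval; ring.
lia.
Qed.

End EigenvalueBound.

Lemma t_eigenvalue (r : C) (u : 'rV[C]_d) : u != 0 -> u *m t = r *: u ->
  exists2 i, (i <= 2 * n)%N & r = tval i.
Proof.
have [K t_spec] := t_eigenvalue_shape.
move=> u_neq0 ut; have [i0 _ r_eq] := t_spec r u u_neq0 ut.
by exists i0 => //; apply: (eigenvalue_index_le t_spec u_neq0); rewrite -r_eq.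
Qed.

Lemma hw_dim_bound : ((n./2).+1 * (n./2).+1 <= d)%N.
Proof.
have half_le : (2 * n./2 <= n)%N by rewrite mul2n -[leqRHS]odd_double_half leq_addl.
rewrite /n in half_le *; have [le12 | lt21] := leqP n1 n2.
- apply: (grid_dim_bound br_f2_e2 br_f2_h2 br_f2_h1 br_f2_t br_f2_e1 br_f2_e3 br_f3_e3 br_f3_t
    br_f3_h2 br_f3_h1 hw_neq0 hw_e2 hw_e1 hw_e3 hw_h2 hw_h1); [by rewrite addnC hw_t | lia | lia].
- apply: (grid_dim_bound br_f1_e1 br_f1_h1 br_f1_h2 br_f1_t br_f1_e2 br_f1_e3 br_f3_e3 br_f3_t
    br_f3_h1 br_f3_h2 hw_neq0 hw_e1 hw_e2 hw_e3 hw_h1 hw_h2); [exact: hw_t | lia | lia].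
Qed.

Lemma root_char_T z : root (char_poly T) z -> exists2 i, (i <= 2 * n)%N & z = n%:R - i%:R.
Proof.
rewrite -char_poly_trmx -eigenvalue_root_char => /eigenvalueP[u ut u_neq0].
exact: (t_eigenvalue u_neq0 ut).
Qed.

Lemma eigs_T : real_eigenvalue_list T (eigs T).
Proof.
rewrite /eigs; case: pselect => [s_ex | no_s]; first exact: (proj2_sig (cid s_ex)).
exfalso; apply: no_s.
have [r char_T] := closed_field_poly_normal (char_poly T).
rewrite (monicP (char_poly_monic _)) scale1r in char_T.
have Re_r z : z \in r -> rc (complex.Re z) = z.
  move=> zr; have : root (char_poly T) z by rewrite char_T root_prod_XsubC.
  by case/root_char_T => i _ ->; rewrite -rc_natB.
exists (sort <=%R (map (@complex.Re R) r)); split; first exact: sort_le_sorted.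
rewrite char_T (perm_big _ (permEl (perm_sort _ _))) /= big_map.
by apply: eq_big_seq => z zr; rewrite Re_r.
Qed.

Lemma size_eigs_T : size (eigs T) = d.
Proof.
by have [_ char_T] := eigs_T; have := size_char_poly T; rewrite char_T size_prod_XsubC => -[].
Qed.

Lemma mem_eigs_T x : x \in eigs T -> exists2 i, (i <= 2 * n)%N & x = n%:R - i%:R.
Proof.
have [_ char_T] := eigs_T.
move=> x_in; have : root (char_poly T) (rc x).
  by rewrite char_T -(big_map (@rc R) xpredT (fun z => 'X - z%:P)) root_prod_XsubC map_f.
by case/root_char_T => i le_i; rewrite -rc_natB => -[->]; exists i.
Qed.

Lemma ks_dist_eigs_T_le : 0 <= ks_dist (nnd_cdf (eigs T)) (@dirac0_cdf R) <= (2 * n + 1)%:R / d%:R.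
Proof.
have [s_sorted _] := eigs_T.
have s_gt0 : (0 < size (eigs T))%N by rewrite size_eigs_T; case: rho_irr.
have s_int : {in eigs T, forall y, y \is a Num.int}.
  by move=> y /mem_eigs_T[i _ ->]; rewrite rpredB ?rpred_nat.
have spread : 1 + (last 0 (eigs T) - head 0 (eigs T)) <= (2 * n + 1)%:R.
  have [i1 _ ->] : exists2 i, (i <= 2 * n)%N & last 0 (eigs T) = n%:R - i%:R.
    by apply: mem_eigs_T; case: (eigs T) s_gt0 => //= y s' _; apply: mem_last.
  have [i0 le_i0 ->] : exists2 i, (i <= 2 * n)%N & head 0 (eigs T) = n%:R - i%:R.
    by apply: mem_eigs_T; case: (eigs T) s_gt0 => //= y s' _; apply: mem_head.
  have : i0%:R <= (2 * n)%:R :> R by rewrite ler_nat.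
  by have := ler0n R i1; rewrite natrD; lra.
apply: ks_dist_dirac0_le => x x0.
have /andP[-> le_spread] := nnd_cdf_int_spectrum s_sorted s_gt0 s_int x0.
by apply: le_trans le_spread _; rewrite size_eigs_T ler_wpM2r // invr_ge0.
Qed.

End HighestWeight.

End Sl3Rep.

Theorem mainTheorem4 (R : realType) (l1 l2 : nat)
  (hborder : l1 = 0%N \/ l2 = 0%N) (hnontriv : (l1, l2) <> (0%N, 0%N))
  (d : nat -> nat) (rho : forall m : nat, 'M[complex R]_3 -> 'M[complex R]_(d m))
  (hrho : forall m : nat, irrep_hw (rho m) (m * l1)%N (m * l2)%N) :
  (fun m : nat => ks_dist (nnd_cdf (eigs (rho m (Tmx R)))) (@dirac0_cdf R))
    @ \oo --> (0 : R).
Proof.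
have le_m m : (m <= m * l1 + m * l2)%N.
  rewrite -mulnDr leq_pmulr // lt0n addn_eq0.
  by apply/negP => /andP[/eqP l1_0 /eqP l2_0]; apply: hnontriv; rewrite l1_0 l2_0.
apply: (@squeeze_cvgr _ _ _ _ (fun=> 0) (fun m => 8 * harmonic m)); last 2 first.
- exact: cvg_cst.
- by rewrite -(mulr0 8); apply: cvgMr; apply: cvg_harmonic.
apply: nearW => m; have [rep [irr [v hwv]]] := hrho m.
have /andP[-> ks_le] := ks_dist_eigs_T_le rep hwv irr.
exact: le_trans ks_le (ratio_le_inv_succ _ (le_m m) (hw_dim_bound rep hwv)).
Qed.
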